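(* Let $\mathbf{x}$ be a $d$-dimensional random vector that is a mixture of two $\sigma$-sub-gaussian random vectors $\mathbf{x}_1,\mathbf{x}_2$ with overlapping supports and mixture proportion $\alpha\in[0,1]$, i.e. its density is $p(\mathbf{x})=\alpha p_1(\mathbf{x})+(1-\alpha)p_2(\mathbf{x})$. Let $\boldsymbol{v}$ satisfy $\|\boldsymbol{v}\|_2=1$ and suppose the Jensen–Shannon divergence satisfies $\mathrm{JS}(\boldsymbol{v}^\top\mathbf{x}_1\,\|\,\boldsymbol{v}^\top\mathbf{x}_2)\le\beta$. Then the differential entropy $H(\boldsymbol{v}^\top\mathbf{x})$ is at most $\mathcal{O}(\log\sigma+\beta)$. *)

From HB Require Import structures.
From mathcomp Require Import all_boot all_order all_algebra.
From mathcomp Require Import all_classical all_reals all_analysis.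
Set Implicit Arguments. Unset Strict Implicit. Unset Printing Implicit Defensive.
Import Order.TTheory GRing.Theory Num.Theory.
Import numFieldNormedType.Exports.
Local Open Scope classical_set_scope.
Local Open Scope ring_scope.

Section Defs.
Context {R : realType}.
Local Notation leb := (@lebesgue_measure R).

Definition unit_vec (d : nat) (u : 'rV[R]_d) : Prop :=
  Num.sqrt (\sum_(j < d) u ord0 j ^+ 2) = 1.

(* A d-dimensional random vector is given by its d real coordinates. *)
Definition vproj {dT} {T : measurableType dT} (d : nat) (u : 'rV[R]_d)
  (X : 'I_d -> T -> R) : T -> R :=
  fun t => \sum_(j < d) u ord0 j * X j t.

Definition measurable_vec {dT} {T : measurableType dT} (d : nat)
  (X : 'I_d -> T -> R) : Prop := forall j, measurable_fun setT (X j).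

Definition subgaussian {dT} {T : measurableType dT} (P : probability T R)
  (d : nat) (X : 'I_d -> T -> R) (sigma : R) : Prop :=
  0 < sigma /\
  forall u : 'rV[R]_d, unit_vec u ->
    P.-integrable setT (EFin \o vproj u X) /\
    forall lam : R,
      (\int[P]_t (expR (lam * (vproj u X t
                  - fine (\int[P]_s (vproj u X s)%:E))))%:E
       <= (expR (lam ^+ 2 * sigma ^+ 2 / 2))%:E)%E.

Definition is_density {dT} {T : measurableType dT} (P : probability T R)
  (Y : T -> R) (f : R -> R) : Prop :=
  (forall x, 0 <= f x) /\ measurable_fun setT f /\
  forall B : set R, measurable B ->
    P (Y @^-1` B) = (\int[leb]_(x in B) (f x)%:E)%E.

(* differential entropy of a density f : H = - int f ln f  (0 ln 0 = 0) *)
Definition diff_entropy (f : R -> R) : \bar R :=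
  (- \int[leb]_x (f x * ln (f x))%:E)%E.

Definition KL (f g : R -> R) : \bar R :=
  (\int[leb]_x (f x * ln (f x / g x))%:E)%E.

Definition JS (f g : R -> R) : \bar R :=
  let m := (fun x => (f x + g x) / 2)%R in
  ((2^-1)%:E * KL f m + (2^-1)%:E * KL g m)%E.

Definition supports_overlap (f g : R -> R) : Prop :=
  (0 < leb ([set x | (0 < f x)%R] `&` [set x | (0 < g x)%R]))%E.

End Defs.

From HB Require Import structures.
From mathcomp Require Import all_boot all_order all_algebra.
From mathcomp Require Import all_classical all_reals all_analysis.
From mathcomp Require Import measurable_realfun ring lra.
Set Implicit Arguments.
Unset Strict Implicit.
Unset Printing Implicit Defensive.
Import Order.TTheory GRing.Theory Num.Theory.
Local Open Scope classical_set_scope.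
Local Open Scope ring_scope.

(* Let Y = v^T x have density f, and let m_i be the mean of v^T x_i.  By
   Gibbs' inequality, H(f) <= - E_f[ln g] for every probability density g > 0.
   Take for g the average of the normal densities N(m_1, sigma^2) and
   N(m_2, sigma^2): then - ln g(y) <= ln (2 sqrt(2 pi) sigma) + psi(y), where
   psi(y) = min_i (y - m_i)^2 / (2 sigma^2).  Since the law of Y is the
   alpha-mixture of the laws of the Y_i = v^T x_i, E_f[psi] is at most
   alpha E[psi(Y_1)] + (1 - alpha) E[psi(Y_2)], and each
   E[(Y_i - m_i)^2 / (2 sigma^2)] is at most 2 exp(1/2) by the sub-gaussian
   bound on the moment generating function at lambda = +-1/sigma.  Hence
   H(f) <= ln sigma + ln (2 sqrt(2 pi)) + 2 exp(1/2); beta enters only through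
   JS >= 0. *)

Section real_inequalities.
Context (R : realType).
Implicit Types u v w z : R.

Lemma sub_le_mul_lnB u v : 0 <= u -> 0 <= v -> (0 < u -> 0 < v) ->
  u - v <= u * (ln u - ln v).
Proof.
move=> u0 v0 uv; have [->|u_neq0] := eqVneq u 0.
  by rewrite mul0r sub0r oppr_le0.
have u_gt0 : 0 < u by rewrite lt_def u_neq0.
have v_gt0 := uv u_gt0.
have ln_le : ln (v / u) <= v / u - 1.
  have := @le_ln1Dx R (v / u - 1); rewrite addrCA subrr addr0; apply.
  have := divr_gt0 v_gt0 u_gt0; lra.
have uvu : u * (v / u) = v by rewrite mulrCA divff ?mulr1.
have := ler_wpM2l u0 ln_le.
rewrite ln_div ?posrE// !mulrBr mulr1 uvu; lra.
Qed.

Lemma mul_ln_div u v : 0 <= u -> (0 < u -> 0 < v) ->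
  u * ln (u / v) = u * (ln u - ln v).
Proof.
move=> u0 uv; have [->|u_neq0] := eqVneq u 0; first by rewrite !mul0r.
have u_gt0 : 0 < u by rewrite lt_def u_neq0.
by rewrite ln_div ?posrE ?uv.
Qed.

Lemma gibbs_le_mul_ln u v w : 0 <= u -> 0 < v -> w <= ln v ->
  u * w + u - v <= u * ln u.
Proof.
move=> u0 v0 wv; have := sub_le_mul_lnB u0 (ltW v0) (fun=> v0).
have := ler_wpM2l u0 wv; rewrite mulrBr; lra.
Qed.

Lemma half_sqr_le_expRD z : z ^+ 2 / 2 <= expR z + expR (- z).
Proof.
have exp_abs : expR `|z| <= expR z + expR (- z).
  have [z0|z0] := lerP 0 z.
    by rewrite ger0_norm// lerDl expR_ge0.
  by rewrite ltr0_norm// lerDr expR_ge0.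
rewrite -real_normK ?num_real//; apply: le_trans exp_abs.
by apply: le_trans (expR_ge1Dxn 1 (normr_ge0 z)); rewrite lerDr.
Qed.

End real_inequalities.

Section integral_lemmas.
Local Open Scope ereal_scope.
Context d (T : measurableType d) (R : realType).
Variable mu : {measure set T -> \bar R}.

Lemma ge0_integrable (f : T -> \bar R) : (forall x, 0 <= f x) ->
  measurable_fun setT f -> \int[mu]_x f x < +oo -> mu.-integrable setT f.
Proof.
move=> f0 mf fty; apply/integrableP; split => //.
by under eq_integral do rewrite gee0_abs//.
Qed.

Lemma density_integrable (f : T -> R) : (forall x, 0 <= f x)%R ->
  measurable_fun setT f -> \int[mu]_x (f x)%:E = 1 ->
  mu.-integrable setT (EFin \o f).
Proof.
move=> f0 mf If; apply: ge0_integrable; rewrite ?If ?ltry//.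
exact/measurable_EFinP.
Qed.

Lemma le_integral_measurable (D : set T) (f g : T -> \bar R) : measurable D ->
  measurable_fun D f -> measurable_fun D g -> (forall x, D x -> f x <= g x) ->
  \int[mu]_(x in D) f x <= \int[mu]_(x in D) g x.
Proof.
move=> mD mf mg fg; rewrite (integralE mu D f) (integralE mu D g).
apply: leeB; apply: ge0_le_integral => //.
- exact: measurable_funepos.
- exact: measurable_funepos.
- move=> x Dx; apply: funepos_le (mem_set Dx).
  by move=> y /[!inE]; exact: fg.
- exact: measurable_funeneg.
- exact: measurable_funeneg.
- move=> x Dx; apply: funeneg_le (mem_set Dx).
  by move=> y /[!inE]; exact: fg.
Qed.

Lemma integral_average_density (f g : T -> R) :
  (forall x, 0 <= f x)%R -> (forall x, 0 <= g x)%R ->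
  measurable_fun setT f -> measurable_fun setT g ->
  \int[mu]_x (f x)%:E = 1 -> \int[mu]_x (g x)%:E = 1 ->
  \int[mu]_x ((f x + g x) / 2)%:E = 1.
Proof.
move=> f0 g0 mf mg If Ig.
have intf := density_integrable f0 mf If.
have intg := density_integrable g0 mg Ig.
under eq_integral do rewrite mulrC EFinM EFinD.
rewrite integralZl//; last exact: integrableD.
by rewrite integralD// If Ig -EFinD -EFinM mulrC divff.
Qed.

End integral_lemmas.

Section integral_density.
Local Open Scope ereal_scope.
Context d (T : measurableType d) (R : realType).
Variables (nu : {finite_measure set T -> \bar R})
  (mu : {sigma_finite_measure set T -> \bar R}) (f : T -> R).
Hypotheses (mf : measurable_fun setT f)
  (nuf : forall A, measurable A -> nu A = \int[mu]_(x in A) (f x)%:E).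

Let nu_dominated : nu `<< mu.
Proof.
apply/null_content_dominatesP => A mA muA0; rewrite nuf// null_set_integral//.
exact/measurable_EFinP/measurable_funTS.
Qed.

Let ae_eq_density :
  ae_eq mu setT (Radon_Nikodym_SigmaFinite.f nu mu) (EFin \o f).
Proof.
apply: integral_ae_eq => //.
- exact: Radon_Nikodym_SigmaFinite.f_integrable.
- exact/measurable_EFinP.
- by move=> E _ mE; rewrite -Radon_Nikodym_SigmaFinite.f_integral// nuf.
Qed.

Lemma ge0_integral_density (g : T -> \bar R) : (forall x, 0 <= g x) ->
  measurable_fun setT g -> \int[nu]_x g x = \int[mu]_x (g x * (f x)%:E).
Proof.
move=> g0 mg.
rewrite -(Radon_Nikodym_SigmaFinite.change_of_variables nu_dominated g0
  measurableT mg).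
apply: ae_eq_integral => //.
- apply: emeasurable_funM => //.
  exact: measurable_int (Radon_Nikodym_SigmaFinite.f_integrable _).
- by apply: emeasurable_funM => //; exact/measurable_EFinP.
- exact: ae_eqe_mul2l.
Qed.

End integral_density.

Lemma ge0_integral_mixture d (T : measurableType d) (R : realType)
    (nu nu1 nu2 : {measure set T -> \bar R}) (a b : R) (g : T -> \bar R) :
  0 <= a -> 0 <= b ->
  (forall A, measurable A -> nu A = (a%:E * nu1 A + b%:E * nu2 A)%E) ->
  (forall x, 0 <= g x)%E -> measurable_fun setT g ->
  (\int[nu]_x g x = a%:E * \int[nu1]_x g x + b%:E * \int[nu2]_x g x)%E.
Proof.
move=> a0 b0 nuE g0 mg.
rewrite (@eq_measure_integral _ _ _ _
  (measure_add (mscale (NngNum a0) nu1) (mscale (NngNum b0) nu2))); last first.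
  move=> A mA _; rewrite nuE //; symmetry.
  exact: (measure_addE (mscale (NngNum a0) nu1) (mscale (NngNum b0) nu2) A).
by rewrite ge0_integral_measure_add// !ge0_integral_mscale.
Qed.

Section gibbs.
Local Open Scope ereal_scope.
Context d (T : measurableType d) (R : realType).
Variable mu : {measure set T -> \bar R}.
Variables f g : T -> R.
Hypotheses (f0 : forall x, (0 <= f x)%R) (g0 : forall x, (0 <= g x)%R).
Hypotheses (mf : measurable_fun setT f) (mg : measurable_fun setT g).
Hypotheses (If : \int[mu]_x (f x)%:E = 1) (Ig : \int[mu]_x (g x)%:E = 1).

Let intf : mu.-integrable setT (EFin \o f) := density_integrable f0 mf If.
Let intg : mu.-integrable setT (EFin \o g) := density_integrable g0 mg Ig.

Lemma gibbs_inequality (phi : T -> R) : (forall x, 0 < g x)%R ->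
  (forall x, phi x <= ln (g x))%R ->
  mu.-integrable setT (fun x => (f x * phi x)%:E) ->
  \int[mu]_x (f x * phi x)%:E <= \int[mu]_x (f x * ln (f x))%:E.
Proof.
move=> g_gt0 phi_le intfphi.
have -> : \int[mu]_x (f x * phi x)%:E
    = \int[mu]_x ((f x * phi x)%:E + (f x)%:E - (g x)%:E).
  rewrite integralB//; last exact: integrableD.
  by rewrite integralD// If Ig addeK.
apply: le_integral_measurable => //.
- apply: emeasurable_funB; last exact/measurable_EFinP.
  apply: emeasurable_funD; last exact/measurable_EFinP.
  exact: measurable_int intfphi.
- apply/measurable_EFinP; apply: measurable_funM => //.
  exact: measurableT_comp mf.
- by move=> x _; rewrite -EFinD lee_fin gibbs_le_mul_ln.
Qed.

Lemma entropy_le_gibbs (c b : R) (psi : T -> R) : (forall x, 0 < g x)%R ->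
  (forall x, 0 <= psi x)%R -> measurable_fun setT psi ->
  (forall x, c - psi x <= ln (g x))%R ->
  \int[mu]_x (f x * psi x)%:E <= b%:E ->
  - (\int[mu]_x (f x * ln (f x))%:E) <= (b - c)%:E.
Proof.
move=> g_gt0 psi0 mpsi psi_le fpsi_le.
have intfpsi : mu.-integrable setT (fun x => (f x * psi x)%:E).
  apply: ge0_integrable.
  - by move=> x; rewrite lee_fin mulr_ge0.
  - by apply/measurable_EFinP; exact: measurable_funM.
  - exact: le_lt_trans fpsi_le (ltry _).
have intfphi : mu.-integrable setT (fun x => (f x * (c - psi x))%:E).
  apply: eq_integrable (integrableB measurableT
    (integrableZl measurableT c intf) intfpsi) => //.
  by move=> x _ /=; rewrite -EFinM -EFinD mulrBr [(c * _)%R]mulrC.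
have := gibbs_inequality g_gt0 psi_le intfphi.
have -> : \int[mu]_x (f x * (c - psi x))%:E
    = c%:E - \int[mu]_x (f x * psi x)%:E.
  under eq_integral do rewrite mulrBr mulrC EFinB EFinM.
  by rewrite integralB ?integrableZl// integralZl// If mule1.
rewrite leeNl; apply: le_trans.
by rewrite -EFinN opprB EFinB; exact: leeB (lexx _) fpsi_le.
Qed.

Lemma integral_mul_ln_div_ge0 : (forall x, 0 < f x -> 0 < g x)%R ->
  0 <= \int[mu]_x (f x * ln (f x / g x))%:E.
Proof.
move=> fg; under eq_integral => x _ do rewrite (mul_ln_div (f0 x) (fg x)).
have <- : \int[mu]_x ((f x)%:E - (g x)%:E) = 0.
  by rewrite integralB_EFin// If Ig subee.
apply: le_integral_measurable => //.
- by apply: emeasurable_funB; exact/measurable_EFinP.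
- apply/measurable_EFinP; apply: measurable_funM => //.
  apply: measurable_funB; apply: measurableT_comp => //; exact: measurable_ln.
- move=> x _; rewrite -EFinB lee_fin.
  exact: sub_le_mul_lnB (f0 x) (g0 x) (fg x).
Qed.

End gibbs.

Lemma JS_ge0 (R : realType) (f g : R -> R) :
  (forall x, 0 <= f x) -> (forall x, 0 <= g x) ->
  measurable_fun setT f -> measurable_fun setT g ->
  (\int[lebesgue_measure]_x (f x)%:E = 1)%E ->
  (\int[lebesgue_measure]_x (g x)%:E = 1)%E ->
  (0 <= JS f g)%E.
Proof.
move=> f0 g0 mf mg If Ig.
have m0 x : 0 <= (f x + g x) / 2 by rewrite divr_ge0 ?addr_ge0.
have mm : measurable_fun setT (fun x => (f x + g x) / 2).
  by apply: measurable_funM => //; exact: measurable_funD.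
have Im := integral_average_density (mu := lebesgue_measure) f0 g0 mf mg If Ig.
rewrite /JS /KL; apply: adde_ge0; apply: mule_ge0; rewrite ?lee_fin ?invr_ge0//.
- apply: integral_mul_ln_div_ge0 => // x fx.
  by rewrite divr_gt0 ?ltr_wpDr.
- apply: integral_mul_ln_div_ge0 => // x gx.
  by rewrite divr_gt0 ?ltr_wpDl.
Qed.

(* [normal_fun m s y = expR (- normal_exponent m s y)]. *)
Definition normal_exponent {R : realType} (m s y : R) : R :=
  (y - m) ^+ 2 / (s ^+ 2 *+ 2).

Lemma normal_exponent_ge0 {R : realType} (m s y : R) :
  0 <= normal_exponent m s y.
Proof. by rewrite divr_ge0 ?mulrn_wge0 ?sqr_ge0. Qed.

Lemma measurable_normal_exponent {R : realType} (m s : R) :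
  measurable_fun setT (normal_exponent m s).
Proof.
by apply: measurable_funM => //; exact: measurable_funX (measurable_funB _ _).
Qed.

Lemma subgaussian_normal_exponent d (T : measurableType d) (R : realType)
    (mu : {measure set T -> \bar R}) (Y : T -> R) (m s : R) :
  measurable_fun setT Y -> 0 < s ->
  (forall lam : R, (\int[mu]_t (expR (lam * (Y t - m)))%:E
                    <= (expR (lam ^+ 2 * s ^+ 2 / 2))%:E)%E) ->
  (\int[mu]_t (normal_exponent m s (Y t))%:E <= (expR 2^-1 *+ 2)%:E)%E.
Proof.
move=> mY s0 mgf.
have mexp lam : measurable_fun setT (fun t => expR (lam * (Y t - m))).
  apply: measurableT_comp => //.
  by apply: measurable_funM => //; exact: measurable_funB.
have mgf_half lam : lam ^+ 2 = s ^-2 ->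
    (\int[mu]_t (expR (lam * (Y t - m)))%:E <= (expR 2^-1)%:E)%E.
  move=> lam2; apply: le_trans (mgf lam) _.
  by rewrite lee_fin ler_expR lam2 mulVf ?mul1r ?sqrf_eq0 ?gt_eqF.
apply: (@le_trans _ _ (\int[mu]_t ((expR (s^-1 * (Y t - m)))%:E
                                   + (expR (- s^-1 * (Y t - m)))%:E))%E).
  apply: ge0_le_integral => //.
  - by move=> t _; rewrite lee_fin normal_exponent_ge0.
  - apply/measurable_EFinP.
    exact: measurableT_comp (measurable_normal_exponent _ _) mY.
  - by apply: emeasurable_funD; exact/measurable_EFinP.
  - move=> t _; rewrite -EFinD lee_fin mulNr.
    have -> : normal_exponent m s (Y t) = (s^-1 * (Y t - m)) ^+ 2 / 2.
      by rewrite /normal_exponent -mulr_natr; field; lra.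
    exact: half_sqr_le_expRD.
rewrite ge0_integralD//; [|exact/measurable_EFinP..].
by rewrite mulr2n EFinD leeD// mgf_half// ?sqrrN exprVn.
Qed.

Section normal_mixture.
Context (R : realType) (s : R).
Hypothesis s0 : 0 < s.
Local Notation leb := (@lebesgue_measure R).

Let s_neq0 : s != 0. Proof. by rewrite gt_eqF. Qed.

Lemma normal_pdf_gt0 (m y : R) : 0 < normal_pdf m s y.
Proof. by rewrite normal_pdfE// mulr_gt0 ?expR_gt0// normal_peak_gt0. Qed.

Lemma ln_half_normal_pdf (m y : R) :
  ln (normal_pdf m s y / 2) = ln (normal_peak s / 2) - normal_exponent m s y.
Proof.
rewrite normal_pdfE// /normal_fun mulrAC.
by rewrite lnM ?posrE ?expR_gt0 ?divr_gt0 ?normal_peak_gt0// expRK mulNr.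
Qed.

Lemma ln_half_normal_peak :
  ln (normal_peak s / 2) = - (ln s + ln (2 * Num.sqrt (pi *+ 2))).
Proof.
have sqrt_pi : 0 < Num.sqrt (pi *+ 2 : R).
  by rewrite sqrtr_gt0 pmulrn_lgt0// pi_gt0.
rewrite /normal_peak -mulrnAr sqrtrM ?sqr_ge0// sqrtr_sqr ger0_norm ?ltW//.
rewrite ln_div ?posrE ?invr_gt0 ?mulr_gt0// lnV ?posrE ?mulr_gt0//.
by rewrite !lnM ?posrE//; lra.
Qed.

Definition normal_mix (m1 m2 y : R) :=
  (normal_pdf m1 s y + normal_pdf m2 s y) / 2.

Variables m1 m2 : R.

Lemma normal_mix_gt0 y : 0 < normal_mix m1 m2 y.
Proof. by rewrite divr_gt0// addr_gt0// normal_pdf_gt0. Qed.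

Lemma measurable_normal_mix : measurable_fun setT (normal_mix m1 m2).
Proof.
apply: measurable_funM => //.
by apply: measurable_funD; exact: measurable_normal_pdf.
Qed.

Lemma integral_normal_mix : (\int[leb]_y (normal_mix m1 m2 y)%:E = 1)%E.
Proof.
apply: integral_average_density; try exact: normal_pdf_ge0.
- exact: measurable_normal_pdf.
- exact: measurable_normal_pdf.
- exact: integral_normal_pdf.
- exact: integral_normal_pdf.
Qed.

Lemma ln_normal_mix_ge y :
  ln (normal_peak s / 2)
    - Num.min (normal_exponent m1 s y) (normal_exponent m2 s y)
  <= ln (normal_mix m1 m2 y).
Proof.
have ln_le m : normal_pdf m s y <= normal_pdf m1 s y + normal_pdf m2 s y ->
    ln (normal_peak s / 2) - normal_exponent m s y <= ln (normal_mix m1 m2 y).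
  move=> pdf_le; rewrite -ln_half_normal_pdf.
  by rewrite ler_ln ?posrE ?normal_mix_gt0 ?divr_gt0 ?normal_pdf_gt0// ler_pM2r.
have [_|_] := lerP (normal_exponent m1 s y) (normal_exponent m2 s y).
  by apply: ln_le; rewrite lerDl ltW ?normal_pdf_gt0.
by apply: ln_le; rewrite lerDr ltW ?normal_pdf_gt0.
Qed.

End normal_mixture.

Lemma measurable_vproj d (T : measurableType d) (R : realType) (n : nat)
    (u : 'rV[R]_n) (X : 'I_n -> T -> R) :
  measurable_vec X -> measurable_fun setT (vproj u X).
Proof.
move=> mX; apply: (measurable_sum (index_enum _)) => j.
exact: measurable_funM (mX j).
Qed.

Lemma is_density_integral d (T : measurableType d) (R : realType)
    (P : probability T R) (Y : T -> R) (f : R -> R) :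
  is_density P Y f -> (\int[lebesgue_measure]_x (f x)%:E = 1)%E.
Proof. by case=> _ [_ fE]; rewrite -fE// preimage_setT probability_setT. Qed.

Section subgaussian_mixture_entropy.
Local Open Scope ereal_scope.
Context d (T : measurableType d) (R : realType) (P : probability T R).
Local Notation leb := (@lebesgue_measure R).
(* Lebesgue measure is a measure on [measurableTypeR R], hence the codomain. *)
Variables (Y Y1 Y2 : {mfun T >-> measurableTypeR R}) (f : R -> R).
Variables (a s m1 m2 : R).
Hypotheses (s0 : (0 < s)%R) (a0 : (0 <= a)%R) (a1 : (a <= 1)%R).
Hypothesis mgf1 : forall lam : R, \int[P]_t (expR (lam * (Y1 t - m1)))%:E
  <= (expR (lam ^+ 2 * s ^+ 2 / 2))%:E.
Hypothesis mgf2 : forall lam : R, \int[P]_t (expR (lam * (Y2 t - m2)))%:E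
  <= (expR (lam ^+ 2 * s ^+ 2 / 2))%:E.
Hypothesis lawY : forall B, measurable B ->
  P (Y @^-1` B) = a%:E * P (Y1 @^-1` B) + (1 - a)%:E * P (Y2 @^-1` B).
Hypothesis fY : is_density P Y f.

Let psi y := Num.min (normal_exponent m1 s y) (normal_exponent m2 s y).

Let mpsi : measurable_fun setT psi.
Proof. by apply: measurable_minr; exact: measurable_normal_exponent. Qed.

Let psi_ge0 y : (0 <= psi y)%R.
Proof. by rewrite le_min !normal_exponent_ge0. Qed.

Let integral_law_psi_le (Z : {mfun T >-> measurableTypeR R}) m :
  (forall lam : R, \int[P]_t (expR (lam * (Z t - m)))%:E
     <= (expR (lam ^+ 2 * s ^+ 2 / 2))%:E) ->
  (forall y, psi y <= normal_exponent m s y)%R ->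
  \int[distribution P Z]_y (psi y)%:E <= (expR 2^-1 *+ 2)%:E.
Proof.
move=> mgf psi_le.
apply: le_trans (subgaussian_normal_exponent (measurable_funPT Z) s0 mgf).
rewrite /distribution ge0_integral_pushforward//; last 2 first.
- exact/measurable_EFinP.
- by move=> y _; rewrite lee_fin psi_ge0.
rewrite preimage_setT; apply: ge0_le_integral => //.
- by move=> t _; rewrite lee_fin psi_ge0.
- apply/measurable_EFinP.
  by apply: measurableT_comp; [exact: mpsi|exact: measurable_funPT].
- apply/measurable_EFinP.
  apply: measurableT_comp; last exact: measurable_funPT.
  exact: measurable_normal_exponent.
- by move=> t _; rewrite lee_fin psi_le.
Qed.

Let integral_density_psi_le :
  \int[leb]_y (f y * psi y)%:E <= (expR 2^-1 *+ 2)%:E.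
Proof.
have [_ [mf fE]] := fY.
have b0 : (0 <= 1 - a)%R by rewrite subr_ge0.
have mpsiE : measurable_fun setT (EFin \o psi) by exact/measurable_EFinP.
have psiE_ge0 y : 0 <= (psi y)%:E by rewrite lee_fin.
have -> : \int[leb]_y (f y * psi y)%:E = \int[distribution P Y]_y (psi y)%:E.
  under eq_integral do rewrite mulrC EFinM.
  symmetry; exact: (ge0_integral_density (nu := distribution P Y) (mu := leb)
                      mf fE psiE_ge0 mpsiE).
rewrite (ge0_integral_mixture (nu := distribution P Y)
  (nu1 := distribution P Y1) (nu2 := distribution P Y2)
  a0 b0 lawY psiE_ge0 mpsiE).
apply: le_trans (leeD (lee_wpmul2l _ (integral_law_psi_le mgf1 _))
                      (lee_wpmul2l _ (integral_law_psi_le mgf2 _))) _.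
- by rewrite lee_fin.
- by move=> y; rewrite ge_min lexx.
- by rewrite lee_fin.
- by move=> y; rewrite ge_min lexx orbT.
by rewrite -!EFinM -EFinD lee_fin -mulrDl subrKC mul1r.
Qed.

Lemma subgaussian_mixture_entropy_le :
  diff_entropy f <= (ln s + ln (2 * Num.sqrt (pi *+ 2)) + expR 2^-1 *+ 2)%:E.
Proof.
have [f0 [mf _]] := fY.
have g0 y := ltW (normal_mix_gt0 s0 m1 m2 y).
have := entropy_le_gibbs (mu := leb) f0 g0 mf (measurable_normal_mix s m1 m2)
  (is_density_integral fY) (integral_normal_mix s m1 m2)
  (normal_mix_gt0 s0 m1 m2) psi_ge0 mpsi (ln_normal_mix_ge s0 m1 m2)
  integral_density_psi_le.
by rewrite (ln_half_normal_peak s0) opprK addrC.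
Qed.

End subgaussian_mixture_entropy.

Theorem mainTheorem5 (R : realType) :
  exists C1 C2 : R, 0 < C2 /\
  forall (dT : measure_display) (T : measurableType dT) (P : probability T R)
    (d : nat) (x x1 x2 : 'I_d -> T -> R) (sigma alpha beta : R)
    (v : 'rV[R]_d) (f1 f2 : R -> R),
    measurable_vec x -> measurable_vec x1 -> measurable_vec x2 ->
    subgaussian P x1 sigma -> subgaussian P x2 sigma ->
    0 <= alpha <= 1 ->
    (* law of x is the mixture alpha law(x1) + (1 - alpha) law(x2)
       (stated through all one-dimensional projections, Cramer-Wold) *)
    (forall (u : 'rV[R]_d) (B : set R), measurable B ->
       P (vproj u x @^-1` B) =
       (alpha%:E * P (vproj u x1 @^-1` B)
        + (1 - alpha)%:E * P (vproj u x2 @^-1` B))%E) ->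
    unit_vec v ->
    is_density P (vproj v x1) f1 -> is_density P (vproj v x2) f2 ->
    supports_overlap f1 f2 ->
    (JS f1 f2 <= beta%:E)%E ->
    forall f : R -> R, is_density P (vproj v x) f ->
      (diff_entropy f <= (C1 + C2 * (ln sigma + beta))%:E)%E.
Proof.
exists (ln (2 * Num.sqrt (pi *+ 2)) + expR 2^-1 *+ 2), 1; split => //.
move=> dT T P d x x1 x2 sigma alpha beta v f1 f2 mx mx1 mx2 sg1 sg2
  /andP[a0 a1] law_x v1 dens1 dens2 _ JS_le f dens.
pose rv X (mX : measurable_vec X) : {mfun T >-> measurableTypeR R} :=
  mfun_Sub (rT := measurableTypeR R) (mem_set (measurable_vproj v mX)).
have entropy_le := subgaussian_mixture_entropy_le (Y := rv x mx)
  (Y1 := rv x1 mx1) (Y2 := rv x2 mx2) sg1.1 a0 a1 (sg1.2 v v1).2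
  (sg2.2 v v1).2 (law_x v) dens.
have beta_ge0 : 0 <= beta.
  rewrite -lee_fin; apply: le_trans JS_le.
  have [f1_ge0 [mf1 _]] := dens1; have [f2_ge0 [mf2 _]] := dens2.
  exact: JS_ge0 f1_ge0 f2_ge0 mf1 mf2
    (is_density_integral dens1) (is_density_integral dens2).
by apply: le_trans entropy_le _; rewrite lee_fin mul1r; lra.
Qed.
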